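(* For every $n\ge1$, finite set $A$ and $g\in\mathscr G_n(A)$, the simplicial set $\Gamma_g=\{x\in\Gamma(A)\mid\gamma(x)\le g\}$ (a simplicial subset of $\Gamma_n(A)$) has contractible geometric realisation $|\Gamma_g|$.
   Context: For a finite set $A$, $\Gamma(A)$ is the simplicial set whose $k$-simplices are sequences $x=(L_0,\dots,L_k)$ of linear orders on $A$, faces deleting and degeneracies repeating entries. For $a\neq b$, $w_x(a,b)$ is $1$ plus the number of $1\le i\le k$ such that the relative order of $a,b$ differs between $L_{i-1}$ and $L_i$; $\Gamma_n(A)$ is the simplicial subset of simplices with all weights $\le n$. $\gamma(x)$ is the complete directed graph on $A$ with edge $a\to b$ iff $a<b$ in $L_0$, of weight $w_x(a,b)$. $\mathscr G_n(A)$ is the poset of acyclic complete directed graphs on $A$ with edge weights in $\{1,\dots,n\}$ (exactly one directed weighted edge per two-element subset), ordered by $g\le h$ iff whenever $a\xrightarrow{v}b$ in $g$, either $a\xrightarrow{w}b$ in $h$ with $v\le w$ or $b\xrightarrow{w}a$ in $h$ with $v<w$. *)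

From HB Require Import structures.
From mathcomp Require Import all_boot all_order all_algebra generic_quotient.
From mathcomp Require Import all_classical all_reals.
From mathcomp Require Import topology_structure product_topology function_spaces
  subspace_topology subtype_topology sigT_topology quotient_topology
  num_topology matrix_topology normedtype.
Import numFieldTopology.Exports numFieldNormedType.Exports.
From Stdlib Require Import Relations.Relation_Operators.

Set Implicit Arguments.
Unset Strict Implicit.
Unset Printing Implicit Defensive.

Import Order.TTheory GRing.Theory Num.Theory.
Local Open Scope classical_set_scope.
Local Open Scope ring_scope.
Local Open Scope quotient_scope.

Definition is_linord (A : finType) (f : {ffun A * A -> bool}) : bool :=
  [&& [forall a, ~~ f (a, a)],
      [forall a, forall b, forall c, f (a, b) && f (b, c) ==> f (a, c)] &
      [forall a, forall b, (a != b) ==> f (a, b) || f (b, a)]].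

Definition linord (A : finType) := {f : {ffun A * A -> bool} | is_linord f}.

Definition lt_lo (A : finType) (L : linord A) (a b : A) : bool := val L (a, b).

(** * The simplicial set Gamma(A)
   A k-simplex is a sequence (L_0,...,L_k) of linear orders, represented by a
   nonempty [seq (linord A)] of size k+1; the simplicial operator associated to
   a monotone map theta : [m] -> [k] sends x to x o theta. *)

Definition weight (A : finType) (x : seq (linord A)) (a b : A) : nat :=
  1 + count (fun p : linord A * linord A => lt_lo p.1 a b != lt_lo p.2 a b)
            (zip x (behead x)).

Record wgraph (A : finType) := WGraph {
  wdir : rel A;
  wwt  : A -> A -> nat   (* wwt a b : weight of the edge a -> b (when present) *)
}.

Definition in_Gn (n : nat) (A : finType) (g : wgraph A) : Prop :=
  [/\ forall a, ~~ wdir g a a,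
      forall a b, a != b -> (wdir g a b (+) wdir g b a),
      forall a b, wdir g a b -> (1 <= wwt g a b <= n)%N &
      forall (a : A) (p : seq A), p != [::] -> path (wdir g) a p -> last a p != a].

Definition wg_le (A : finType) (g h : wgraph A) : bool :=
  [forall a, forall b, wdir g a b ==>
     ((wdir h a b && (wwt g a b <= wwt h a b)%N) ||
      (wdir h b a && (wwt g a b < wwt h b a)%N))].

Definition gamma (A : finType) (x : seq (linord A)) : wgraph A :=
  WGraph (fun a b => if x is L0 :: _ then lt_lo L0 a b else false)
         (fun a b => weight x a b).

Definition Gamma_g (A : finType) (g : wgraph A) (x : seq (linord A)) : bool :=
  (x != [::]) && wg_le (gamma x) g.

(** * Geometric realisation of a simplicial subset of Gamma(A)
   |X| = (coproduct over simplices x of Delta^{dim x}) / ~ where ~ is the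
   equivalence relation generated by (x o theta, t) ~ (x, theta_* t) for
   monotone theta. Points of Delta^k are represented as functions nat -> R
   supported on {0..k}, nonnegative with sum 1, topologised as a subspace of
   the product topology (which on this finite-dimensional set is the
   Euclidean one). *)

Section Realisation.
Variables (R : realType) (A : finType) (P : pred (seq (linord A))).

Definition simp_idx := {x : seq (linord A) | P x && (x != [::])}.

Definition stdsimplex (m : nat) : set {ptws nat -> R} :=
  [set t | (forall i, 0 <= t i) /\ (forall i, (m <= i)%N -> t i = 0) /\
           \sum_(i < m) t i = 1].

Definition real_pts := {x : simp_idx & set_type (stdsimplex (size (val x)))}.

Definition sget (T : Type) (s : seq T) (i : nat) : option T :=
  nth None (map Some s) i.

(* one generating identification: (x', t') with x' = x o theta,
   t = theta_* t' *)
Definition real_gen (p q : real_pts) : Prop :=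
  let x := val (projT1 p) in let t : nat -> R := set_val (projT2 p) in
  let x' := val (projT1 q) in let t' : nat -> R := set_val (projT2 q) in
  exists theta : nat -> nat,
    [/\ forall i j, (i <= j < size x')%N -> (theta i <= theta j)%N,
        forall i, (i < size x')%N -> (theta i < size x)%N,
        forall i, (i < size x')%N -> sget x' i = sget x (theta i) &
        forall j, t j = \sum_(i < size x' | theta i == j) t' i].

Definition real_equiv (p q : real_pts) : bool :=
  `[< clos_refl_sym_trans real_pts real_gen p q >].

Lemma real_equiv_refl : reflexive real_equiv.
Proof. by move=> p; apply/asboolP; exact: rst_refl. Qed.

Lemma real_equiv_sym : symmetric real_equiv.
Proof.
by move=> p q; apply/asboolP/asboolP; exact: rst_sym.
Qed.

Lemma real_equiv_trans : transitive real_equiv.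
Proof.
move=> q p r /asboolP Hpq /asboolP Hqr; apply/asboolP; exact: rst_trans Hpq Hqr.
Qed.

Definition real_equiv_rel := EquivRel real_equiv real_equiv_refl
  real_equiv_sym real_equiv_trans.

Definition realisation : topologicalType :=
  quotient_topology {eq_quot real_equiv_rel}.

End Realisation.

Definition contractible (R : realType) (X : topologicalType) : Prop :=
  exists (x0 : X) (H : X * R -> X),
    [/\ {within [set p : X * R | p.2 \in `[0, 1]], continuous H},
        forall x, H (x, 0) = x &
        forall x, H (x, 1) = x0].

(* |Gamma_g| is contractible because Gamma_g is a cone.

   The edge relation of g is itself a linear order L_g on A (g is a complete
   acyclic graph).  Prepending L_g to a simplex x of Gamma_g keeps it in
   Gamma_g: on an edge a -> b of g the new weight w(a,b) grows by at most one,
   and it grows only when the first order of x has b before a, in which case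
   gamma(x) <= g already bounds w_x(a,b) strictly by the weight of a -> b.
   Hence Gamma_g is a cone with apex the vertex [:: L_g].

   The section Cone shows that the realisation of any cone P with apex L
   is contractible: the homotopy sends the point t of the simplex y, at time
   s, to the point of the simplex L :: y at height s above t. *)

From mathcomp Require Import all_boot all_order all_algebra interval_inference.
From mathcomp Require Import generic_quotient all_classical all_reals.
From mathcomp Require Import topology_structure product_topology function_spaces
  subspace_topology subtype_topology sigT_topology quotient_topology
  num_topology order_topology nat_topology normedtype initial_topology compact
  pseudometric_structure.
From Stdlib Require Import Relations.Relation_Operators.

Set Implicit Arguments.
Unset Strict Implicit.
Unset Printing Implicit Defensive.
Import numFieldTopology.Exports numFieldNormedType.Exports.
Import Order.TTheory GRing.Theory Num.Theory Itv.Exports.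

Section LinearOrders.
Variable A : finType.
Implicit Types (L : linord A) (a b c : A).

Lemma lt_lo_irr L a : ~~ lt_lo L a a.
Proof. by have /and3P [/forallP irr _ _] := valP L; exact: irr. Qed.

Lemma lt_lo_trans L a b c : lt_lo L a b -> lt_lo L b c -> lt_lo L a c.
Proof.
have /and3P [_ /forallP tr _] := valP L => hab hbc.
by move: (tr a) => /forallP /(_ b) /forallP /(_ c) /implyP; apply; apply/andP.
Qed.

Lemma lt_lo_total L a b : a != b -> lt_lo L a b || lt_lo L b a.
Proof.
have /and3P [_ _ /forallP tot] := valP L => nab.
by move: (tot a) => /forallP /(_ b) /implyP; apply.
Qed.

Lemma lt_lo_asym L a b : a != b -> lt_lo L b a = ~~ lt_lo L a b.
Proof.
move=> nab; case hab: (lt_lo L a b) => /=.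
  by apply/negP => hba; move: (lt_lo_irr L a); rewrite (lt_lo_trans hab hba).
by move: (lt_lo_total L nab); rewrite hab.
Qed.

Lemma weight_sym (x : seq (linord A)) a b : a != b -> weight x a b = weight x b a.
Proof.
move=> nab; rewrite /weight; congr (_ + _); apply: eq_count => p /=.
by rewrite !(lt_lo_asym _ nab); case: (lt_lo p.1 a b); case: (lt_lo p.2 a b).
Qed.

Lemma weight_cons2 L L0 y a b :
  weight [:: L, L0 & y] a b = (lt_lo L a b != lt_lo L0 a b) + weight (L0 :: y) a b.
Proof. by rewrite /weight /= addnCA. Qed.

End LinearOrders.

Section GraphOrder.
Variables (A : finType) (n : nat) (g : wgraph A).
Hypothesis g_Gn : in_Gn n g.

(* An acyclic complete directed graph is the "less than" relation of a linear
   order: transitivity is acyclicity of 2- and 3-cycles. *)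
Lemma graph_is_linord : is_linord [ffun p : A * A => wdir g p.1 p.2].
Proof.
case: g_Gn => irr tourn _ acyc; apply/and3P; split.
- by apply/forallP => a; rewrite ffunE.
- apply/forallP => a; apply/forallP => b; apply/forallP => c; rewrite !ffunE /=.
  apply/implyP => /andP [hab hbc]; have [eac|nac] := eqVneq a c.
    subst c; by have := acyc a [:: b; a] isT; rewrite /= hab hbc eqxx => /(_ isT).
  move: (tourn a c nac); case: (wdir g a c) => //= hca.
  by have := acyc a [:: b; c; a] isT; rewrite /= hab hbc hca eqxx => /(_ isT).
- apply/forallP => a; apply/forallP => b; apply/implyP => nab; rewrite !ffunE /=.
  by move: (tourn a b nab); case: (wdir g a b).
Qed.

Definition graph_linord : linord A :=
  exist (fun f => is_linord f) _ graph_is_linord.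

Lemma lt_graph_linord a b : lt_lo graph_linord a b = wdir g a b.
Proof. by rewrite /lt_lo /= ffunE. Qed.

(* An edge a -> b of g on which L_0 disagrees gets
   its weight raised by one, but then gamma(y) already had b -> a dominated
   strictly by a -> b in g. *)
Lemma Gamma_g_cone y : Gamma_g g y -> Gamma_g g (graph_linord :: y).
Proof.
case: g_Gn => irr tourn _ _; case: y => [|L0 y] //= /andP [_ /forallP le_y].
apply/andP; split => //; apply/forallP => a; apply/forallP => b.
rewrite /= lt_graph_linord; apply/implyP => gab.
have nab : a != b by apply: contraTneq gab => ->; rewrite irr.
have gba : wdir g b a = false.
  by move: (tourn a b nab); rewrite gab; case: (wdir g b a).
rewrite gab gba /= orbF weight_cons2 lt_graph_linord gab.
case h: (lt_lo L0 a b) => /=.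
  by move: (le_y a) => /forallP /(_ b) /implyP /(_ h); rewrite /= gab gba /= orbF.
have hba : lt_lo L0 b a by rewrite (lt_lo_asym _ nab) h.
move: (le_y b) => /forallP /(_ a) /implyP /(_ hba); rewrite /= gab gba /=.
by rewrite add1n weight_sym // eq_sym.
Qed.

(* The apex itself is a vertex of Gamma_g, as all weights of g are >= 1. *)
Lemma Gamma_g_apex : Gamma_g g [:: graph_linord].
Proof.
case: g_Gn => _ _ wts _; apply/andP; split => //.
apply/forallP => a; apply/forallP => b; rewrite /= lt_graph_linord.
by apply/implyP => gab; rewrite gab /= /weight /=; case/andP: (wts a b gab) => ->.
Qed.

End GraphOrder.

Local Open Scope classical_set_scope.
Local Open Scope ring_scope.
Local Open Scope quotient_scope.

(** * Two continuity principles for maps out of a product with the real line *)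

Section ProductWithLine.
Variable R : realType.

(* A map out of (quotient of T) x R is continuous as soon as its lift to
   T x R is: since R is locally compact, q x id_R is again a quotient map.
   The proof is the tube lemma over a compact interval around s0. *)
Lemma quotient_prodR_continuous (T Z : topologicalType) (Q : quotType T)
    (h : quotient_topology Q * R -> Z) :
  continuous (fun ts : T * R => h (\pi ts.1, ts.2)) -> continuous h.
Proof.
move=> lift_cts [x s0] U; rewrite nbhsE => -[O [oO Ox] OU].
have [t0 xE] : exists t0 : T, x = \pi t0 by exists (repr x); rewrite reprK.
rewrite {}xE in Ox *.
have [[B C] /= [Bt0 Cs0] BCO] :
    nbhs (t0, s0) ((fun ts : T * R => h (\pi ts.1, ts.2)) @^-1` O).
  exact/lift_cts/open_nbhs_nbhs.
have [r KC] := (nbhs_closedballP C s0).1 Cs0; set K := closed_ball s0 r%:num in KC.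
have cK : compact K by apply: closed_ballR_compact.
(* V is the set of points whose whole segment {x'} x K is mapped into O. *)
pose V : set (quotient_topology Q) := [set x' | forall s, K s -> O (h (x', s))].
have oV : open V.
  rewrite /open /= /quotient_open openE => t Vt.
  (* each (t, s) with s in K has a box neighbourhood mapped into O; compactness
     of K makes the t-component uniform *)
  have cover s : K s -> \forall s' \near s & t' \near t, O (h (\pi t', s')).
    move=> Ks; have [[B' C'] /= [Bt Cs] BCO'] :=
      lift_cts (t, s) _ (open_nbhs_nbhs (conj oO (Vt s Ks))).
    by exists (C', B') => // -[s' t'] [/= Cs' Bt']; exact: (BCO' (t', s')).
  have near_K := (compact_near_coveringP K).1 cK _ (nbhs t)
    (fun t' s => O (h (\pi t', s))) (nbhs_filter t) cover.
  by rewrite /interior; apply: filterS near_K => t' Kt' s Ks; apply: Kt'.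
have Vx : V (\pi t0).
  by move=> s Ks; apply: (BCO (t0, s)); split; [exact: nbhs_singleton | exact: KC].
exists (V, ball s0 r%:num) => /=.
  by split; [exact: open_nbhs_nbhs | exact: nbhsx_ballx].
by move=> [x' s'] /= [Vx' bs']; apply/OU/Vx'/subset_closed_ball.
Qed.

Lemma sigT_prodR_continuous (I : choiceType) (X : I -> topologicalType)
    (Z : topologicalType) (f : {i & X i} * R -> Z) :
  (forall i, continuous (fun ts : X i * R => f (existT _ i ts.1, ts.2))) ->
  continuous f.
Proof.
move=> fibre_cts [[i t] s] U /= fU.
have [[B C] /= [Bt Cs] BCU] := fibre_cts i (t, s) U fU.
exists (existT _ i @` B, C) => /=; first by split => //; exact: existT_nbhs.
by move=> [_ s'] /= [[t' Bt' <-] Cs']; exact: (BCU (t', s')).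
Qed.

End ProductWithLine.

(** * Realisations of cones are contractible *)

Section Cone.
Variables (R : realType) (A : finType) (P : pred (seq (linord A))) (L : linord A).
Hypotheses (P_cone : forall y, P y -> P (L :: y)) (P_apex : P [:: L]).

Local Notation X := (realisation R P).
Local Notation pts := (real_pts R P).
Local Notation pi := (\pi_X : pts -> X).
Local Notation simplex k := (set_type (stdsimplex (R:=R) k)).

(* Homotopy parameter, clamped to [0,1] so that the homotopy is defined on all
   of X x R. *)
Definition clamp (s : R) : R := Num.min (Num.max s 0) 1.

Lemma clamp01 s : 0 <= clamp s <= 1.
Proof. by rewrite /clamp ge_min lexx orbT le_min ler01 le_max lexx orbT. Qed.

Lemma clamp0 : clamp 0 = 0.
Proof. by rewrite /clamp maxxx; apply/min_idPl; exact: ler01. Qed.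

Lemma clamp1 : clamp 1 = 1.
Proof. by rewrite /clamp (max_idPl ler01) minxx. Qed.

Lemma clamp_continuous : continuous clamp.
Proof.
have -> : clamp = (idfun \max cst 0) \min cst 1 by [].
apply: min_fun_continuous; last exact: cst_continuous.
by apply: max_fun_continuous; [move=> ?; exact: cvg_id | exact: cst_continuous].
Qed.

(* Barycentric coordinates of the point of the cone over Delta^k at height c
   above t: weight c on the apex, the others scaled by 1 - c. *)
Definition cone_coords (c : R) (t : nat -> R) : {ptws nat -> R} :=
  fun j => if j is j'.+1 then (1 - c) * t j' else c.

Lemma cone_coords_simplex k c (t : {ptws nat -> R}) : 0 <= c <= 1 ->
  stdsimplex k t -> stdsimplex k.+1 (cone_coords c t).
Proof.
move=> /andP [c0 c1] [t0 [tk ts]]; split; [|split].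
- by case=> [|j] //=; rewrite mulr_ge0 // subr_ge0.
- by case=> [|j] //= hj; rewrite tk ?mulr0.
- by rewrite big_ord_recl /= -mulr_sumr ts mulr1 addrC subrK.
Qed.

Lemma cone_idx_proof (y : simp_idx P) : P (L :: val y) && (L :: val y != [::]).
Proof. by rewrite P_cone //; case/andP: (valP y). Qed.

Definition cone_idx (y : simp_idx P) : simp_idx P :=
  exist (fun x => P x && (x != [::])) _ (cone_idx_proof y).

Definition cone_pt (y : simp_idx P) (s : R) (t : simplex (size (val y))) :
    simplex (size (val (cone_idx y))) :=
  exist _ (cone_coords (clamp s) (val t))
    (mem_set (cone_coords_simplex (clamp01 s) (set_valP t))).

Definition cone_map (p : pts) (s : R) : pts :=
  existT _ (cone_idx (projT1 p)) (cone_pt s (projT2 p)).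

(* Coning commutes with the simplicial operators: theta lifts to the map
   fixing 0 and sending i+1 to theta i + 1. *)
Lemma real_gen_cone p q s : real_gen p q -> real_gen (cone_map p s) (cone_map q s).
Proof.
case: p => y t; case: q => y' t' [theta [mono rng sg sm]].
have {}sm j : sval t j = \sum_(i < size (sval y') | theta i == j) sval t' i := sm j.
exists (fun i => if i is i'.+1 then (theta i').+1 else 0); split.
- case=> [|i] [|j] //= /andP [hij hj]; rewrite ltnS; apply: mono.
  by rewrite !ltnS in hij hj; rewrite hij hj.
- by case=> [|i] //= hi; rewrite ltnS; apply: rng.
- by case=> [|i] //= hi; exact: sg.
- move=> j; rewrite /= big_mkcond big_ord_recl /=.
  under eq_bigr => i _ do rewrite /bump leq0n add1n add0n.
  rewrite !set_valE /=; case: j => [|j] /=; first by rewrite big1 ?addr0.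
  rewrite add0r sm big_mkcond mulr_sumr; apply: eq_bigr => i _ /=.
  by rewrite eqSS; case: ifP; rewrite ?mulr0.
Qed.

Lemma real_equiv_cone p q s :
  real_equiv p q -> real_equiv (cone_map p s) (cone_map q s).
Proof.
move/asboolP => pq; apply/asboolP.
elim: pq => [a b /(real_gen_cone s)|a|a b _|a b c _ ab _ bc].
- exact: rst_step.
- exact: rst_refl.
- exact: rst_sym.
- exact: rst_trans ab bc.
Qed.

(* At time 0 the cone map is the face inclusion d^0, i.e. the identity on X. *)
Lemma real_gen_cone0 p : real_gen (cone_map p 0) p.
Proof.
case: p => y t; exists S; split => //=.
- by move=> i j /andP [hij _]; rewrite ltnS.
- move=> j; rewrite !set_valE /= clamp0; case: j => [|j] /=; first by rewrite big1.
  under eq_bigl => i do rewrite eqSS.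
  rewrite big_ord1_eq subr0 mul1r; case: ltnP => // size_le.
  by have [_ [-> //]] := set_valP t.
Qed.

Definition apex_idx : simp_idx P :=
  exist (fun x => P x && (x != [::])) [:: L] (introT andP (conj P_apex isT)).

Definition apex_coords : {ptws nat -> R} := fun j => if j is 0 then 1 else 0.

Lemma apex_coords_simplex : stdsimplex 1 apex_coords.
Proof.
by split; [case=> [|j] //=; rewrite ler01 | split; [case | rewrite big_ord1]].
Qed.

Definition apex_pt : pts :=
  existT _ apex_idx (exist _ apex_coords (mem_set apex_coords_simplex) :
    simplex (size (val apex_idx))).

Lemma real_gen_cone1 p : real_gen (cone_map p 1) apex_pt.
Proof.
case: p => y t; exists (fun=> 0%N); split => //=; first by case.
move=> j; rewrite !set_valE /= clamp1 big_mkcond big_ord_recl big_ord0 /= addr0.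
by case: j => [|j] //=; rewrite subrr mul0r.
Qed.

Definition cone_homotopy (z : X * R) : X := pi (cone_map (repr z.1) z.2).

Lemma pi_eqP p q : pi p = pi q <-> real_equiv p q.
Proof. by split => /(@eqquotP _ _ {eq_quot real_equiv_rel R P}). Qed.

Lemma cone_homotopyE p s : cone_homotopy (pi p, s) = pi (cone_map p s).
Proof. by apply/pi_eqP/real_equiv_cone/pi_eqP; rewrite reprK. Qed.

Lemma cone_homotopy0 x : cone_homotopy (x, 0) = x.
Proof.
rewrite -[x]reprK cone_homotopyE; apply/pi_eqP/asboolP.
exact/rst_step/real_gen_cone0.
Qed.

Lemma cone_homotopy1 x : cone_homotopy (x, 1) = pi apex_pt.
Proof.
rewrite -[x]reprK cone_homotopyE; apply/pi_eqP/asboolP.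
exact/rst_step/real_gen_cone1.
Qed.

(* Continuity of the cone map on each simplex, coordinate by coordinate: the
   simplex carries the pointwise (= Euclidean) topology. *)
Lemma simplex_coord_continuous k j : continuous (fun t : simplex k => val t j).
Proof.
move=> t; apply: (@continuous_comp _ {ptws nat -> R} _ set_val (proj j) t).
  exact: initial_continuous.
exact: proj_continuous.
Qed.

Lemma cone_coords_continuous k j :
  continuous (fun ts : simplex k * R => cone_coords (clamp ts.2) (val ts.1) j).
Proof.
move=> z.
have clamp_cts : {for z, continuous (fun ts : simplex k * R => clamp ts.2)}.
  apply: (@continuous_comp _ _ _ snd clamp z); first exact: cvg_snd.
  exact: clamp_continuous.
case: j => [|j] //=.
have coord_cts : {for z, continuous (fun ts : simplex k * R => val ts.1 j)}.
  apply: (@continuous_comp _ _ _ fst (fun t : simplex k => val t j) z).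
    exact: cvg_fst.
  exact: simplex_coord_continuous.
by apply: cvgM; [exact: cvgB (cvg_cst _) clamp_cts | exact: coord_cts].
Qed.

Lemma cone_pt_continuous y :
  continuous (fun ts : simplex (size (val y)) * R => cone_pt ts.2 ts.1).
Proof.
apply: (@continuous_comp_initial _ _ _ set_val) => z; apply/pointwise_cvgP => j.
by rewrite nbhs_filterE; exact: cone_coords_continuous.
Qed.

Lemma cone_homotopy_continuous : continuous cone_homotopy.
Proof.
apply: quotient_prodR_continuous.
have -> : (fun ps : pts * R => cone_homotopy (pi ps.1, ps.2)) =
          (fun ps => pi (cone_map ps.1 ps.2)).
  by apply/funext => -[p s]; exact: cone_homotopyE.
apply: sigT_prodR_continuous => y ts.
have to_sigT := continuous_comp (@cone_pt_continuous y ts)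
  (@existT_continuous _ (fun i => simplex (size (val i)) : topologicalType)
     (cone_idx y) _).
exact: continuous_comp to_sigT (@pi_continuous _ {eq_quot real_equiv_rel R P} _).
Qed.

Theorem cone_contractible : contractible R X.
Proof.
exists (pi apex_pt), cone_homotopy; split.
- exact/continuous_subspaceT/cone_homotopy_continuous.
- exact: cone_homotopy0.
- exact: cone_homotopy1.
Qed.

End Cone.

Theorem lemma6 (R : realType) (n : nat) (A : finType) (g : wgraph A) :
  (1 <= n)%N -> in_Gn n g ->
  contractible R (realisation R (Gamma_g g)).
Proof.
move=> _ g_Gn.
exact: (@cone_contractible R A (Gamma_g g) _
  (Gamma_g_cone g_Gn) (Gamma_g_apex g_Gn)).
Qed.
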